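(* Fix a real number $\sigma$. There exist constants $C>0$ and $V_0>0$, depending only on $\sigma$, such that for every integer $r\ge1$ and every real $v$ with $|v|\ge V_0$, writing $s=\sigma+iv$, $$\left|\binom{r+s-1}{r}\right|\le C\,\frac{(r+|v|)^{\sigma-1/2}\,e^{|\sigma+iv|}}{r^{1/2}\,|v|^{\sigma-1/2}}\exp\left(\frac{\pi}{2}|v|\right).$$
   Context: For complex $s$ and integer $r\ge0$, $\binom{r+s-1}{r}=\frac{s(s+1)\cdots(s+r-1)}{r!}=\frac{\Gamma(r+s)}{r!\,\Gamma(s)}$. *)

From Stdlib Require Import Reals Arith.
From Coquelicot Require Import Coquelicot.
Open Scope R_scope.

Fixpoint rising (s : C) (r : nat) : C :=
  match r with
  | O => 1%C
  | S k => Cmult (rising s k) (Cplus s (RtoC (INR k)))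
  end.

(* generalized binomial coefficient binom(r+s-1, r) = s(s+1)...(s+r-1)/r! *)
Definition gbinom (s : C) (r : nat) : C :=
  Cdiv (rising s r) (RtoC (INR (Factorial.fact r))).

From Stdlib Require Import Reals Lra Lia.
From Coquelicot Require Import Coquelicot.
Open Scope R_scope.

(* Write F(r) = |binom(r+s-1, r)| with s = sigma + i v and w = |v|.
   Crude bound: |s + k| <= |s| + r for k < r and r^r <= e^r r!, so
   F(r) <= e^r 2^r e^(b/2) as soon as |s| <= b + r.
   Monotonicity: F(r+1)/F(r) = |s + r|/(r+1) <= exp (Phi(r+1) - Phi(r)) with
   Phi(x) = (sigma-1) ln x - Q/x and Q = |sigma-1| + ((sigma-1)^2 + v^2)/2, so
   F(r) e^(-Phi(r)) is nonincreasing.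
   Let w <= N <= w + 1.  For r <= N the crude bound (b = |s|) suffices; for r >= N
   use it at N (b = |sigma|), then monotonicity, where Q/N <= const + w/2.  Both
   cases reduce to (9/5 + 1/2 + 1/8) w < 5/2 w, using e^|s| e^(pi w/2) >= e^(5w/2),
   2 <= e^(4/5) and ln(w+1) <= w/4 for w >= 48. *)

Lemma exp_le_compat x y : x <= y -> exp x <= exp y.
Proof. intros [Hlt | ->]; [left; exact (exp_increasing _ _ Hlt) | right; reflexivity]. Qed.

Lemma pow_le_exp_mul y z n : 0 <= y -> y <= exp z -> y ^ n <= exp (INR n * z).
Proof.
  intros Hy Hyz. apply Rle_trans with (exp z ^ n); [apply pow_incr; lra |].
  rewrite <- (exp_ln (exp z ^ n)) by (apply pow_lt, exp_pos).
  rewrite ln_pow, ln_exp by apply exp_pos. right; reflexivity.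
Qed.

Lemma ln_sub_le_div a b : 0 < a -> 0 < b -> ln b - ln a <= (b - a) / a.
Proof.
  intros Ha Hb. rewrite <- ln_div by assumption.
  generalize (exp_ineq1_le (ln (b / a))).
  rewrite exp_ln by (apply Rdiv_lt_0_compat; assumption).
  replace ((b - a) / a) with (b / a - 1) by (field; lra). lra.
Qed.

Lemma mul_bounded_by_Rabs a x b : Rabs x <= b -> - (Rabs a * b) <= a * x <= Rabs a * b.
Proof.
  intros Hx. apply Rabs_le_between. rewrite Rabs_mult.
  apply Rmult_le_compat_l; [apply Rabs_pos | exact Hx].
Qed.

Lemma two_le_exp_4_5 : 2 <= exp (4 / 5).
Proof.
  replace (4 / 5) with (1/5 + 1/5 + (1/5 + 1/5)) by field. rewrite !exp_plus.
  generalize (exp_ineq1_le (1 / 5)). intros H.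
  assert (H2 : 36 / 25 <= exp (1 / 5) * exp (1 / 5)) by nra. nra.
Qed.

Lemma ln_succ_le_quarter w : 48 <= w -> ln (w + 1) <= w / 4.
Proof.
  intros Hw. rewrite <- (ln_exp (w / 4)). apply ln_le; [lra |].
  replace (w / 4) with (w / 8 + w / 8) by field. rewrite exp_plus.
  generalize (exp_ineq1_le (w / 8)). nra.
Qed.

Lemma pow_add_le_exp_mul a r : 0 <= a -> (a + INR r) ^ r <= exp a * INR r ^ r.
Proof.
  intros Ha. destruct r as [| r].
  - simpl. generalize (exp_ineq1_le a). lra.
  - assert (Hr : 0 < INR (S r)) by (apply lt_0_INR; lia).
    replace (a + INR (S r)) with (INR (S r) * (1 + a / INR (S r))) by (field; lra).
    rewrite Rpow_mult_distr, Rmult_comm. apply Rmult_le_compat_r; [apply pow_le; lra |].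
    replace a with (INR (S r) * (a / INR (S r))) at 2 by (field; lra).
    apply pow_le_exp_mul; [| apply exp_ineq1_le].
    assert (0 <= a / INR (S r)) by (apply Rdiv_le_0_compat; lra). lra.
Qed.

Lemma pow_le_exp_mul_fact n : INR n ^ n <= exp (INR n) * INR (Factorial.fact n).
Proof.
  induction n as [| n IH]; [simpl; rewrite exp_0; lra |].
  rewrite fact_simpl, mult_INR, S_INR, exp_plus.
  change ((INR n + 1) ^ S n) with ((INR n + 1) * (INR n + 1) ^ n).
  generalize (pos_INR n) (exp_pos 1) (pow_add_le_exp_mul 1 n ltac:(lra)). intros Hn He Hpow.
  rewrite Rplus_comm in Hpow.
  apply Rle_trans with ((INR n + 1) * (exp 1 * (exp (INR n) * INR (Factorial.fact n)))).
  - apply Rmult_le_compat_l; [lra |]. apply Rle_trans with (exp 1 * INR n ^ n); [exact Hpow |].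
    apply Rmult_le_compat_l; lra.
  - right. ring.
Qed.

Lemma Rabs_snd_le_Cmod x y : Rabs y <= Cmod (x, y).
Proof. generalize (Rmax_Cmod (x, y)) (Rmax_r (Rabs x) (Rabs y)). cbn [fst snd]. lra. Qed.

Lemma Cmod_le_Rabs_add x y : Cmod (x, y) <= Rabs x + Rabs y.
Proof.
  unfold Cmod. cbn [fst snd].
  rewrite <- (sqrt_square (Rabs x + Rabs y)) by (generalize (Rabs_pos x) (Rabs_pos y); lra).
  apply sqrt_le_1_alt. rewrite <- (pow2_abs x), <- (pow2_abs y).
  generalize (Rabs_pos x) (Rabs_pos y). nra.
Qed.

Lemma Cmod_rising_S s k : Cmod (rising s (S k)) = Cmod (rising s k) * Cmod (Cplus s (INR k)).
Proof. apply Cmod_mult. Qed.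

Lemma Cmod_rising_le s r : Cmod (rising s r) <= (Cmod s + INR r) ^ r.
Proof.
  induction r as [| r IH]; [simpl; rewrite Cmod_1; lra |].
  rewrite Cmod_rising_S, S_INR. change ((Cmod s + (INR r + 1)) ^ S r)
    with ((Cmod s + (INR r + 1)) * (Cmod s + (INR r + 1)) ^ r).
  assert (Hk : Cmod (Cplus s (INR r)) <= Cmod s + INR r).
  { eapply Rle_trans; [apply Cmod_triangle |].
    rewrite Cmod_R, Rabs_pos_eq by apply pos_INR. lra. }
  generalize (Cmod_ge_0 s) (pos_INR r). intros Hs Hr.
  rewrite Rmult_comm. apply Rmult_le_compat; try apply Cmod_ge_0; [lra |].
  apply Rle_trans with ((Cmod s + INR r) ^ r); [exact IH | apply pow_incr; lra].
Qed.

Lemma Cmod_gbinom s r : Cmod (gbinom s r) = Cmod (rising s r) / INR (Factorial.fact r).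
Proof.
  unfold gbinom. rewrite Cmod_div, Cmod_R, Rabs_pos_eq
    by (apply pos_INR || (intros H; injection H; apply INR_fact_neq_0)).
  reflexivity.
Qed.

Lemma Cmod_gbinom_S s r :
  Cmod (gbinom s (S r)) = Cmod (gbinom s r) * (Cmod (Cplus s (INR r)) / (INR r + 1)).
Proof.
  rewrite !Cmod_gbinom, Cmod_rising_S, fact_simpl, mult_INR, S_INR.
  generalize (pos_INR r) (INR_fact_neq_0 r). intros. field. split; lra.
Qed.

Lemma Cmod_gbinom_le s r b : 0 <= b -> Cmod s <= b + INR r ->
  Cmod (gbinom s r) <= exp (INR r) * 2 ^ r * exp (b / 2).
Proof.
  intros Hb Hs.
  assert (Hrr : 0 < INR r ^ r) by (destruct r; [simpl; lra | apply pow_lt, lt_0_INR; lia]).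
  (* |s| + r <= 2 (b/2 + r) and (b/2 + r)^r <= e^(b/2) r^r *)
  assert (Hrising : Cmod (rising s r) <= 2 ^ r * (exp (b / 2) * INR r ^ r)).
  { eapply Rle_trans; [apply Cmod_rising_le |].
    apply Rle_trans with (2 ^ r * (b / 2 + INR r) ^ r).
    - rewrite <- Rpow_mult_distr. apply pow_incr.
      generalize (Cmod_ge_0 s) (pos_INR r). lra.
    - apply Rmult_le_compat_l; [apply pow_le; lra |].
      apply pow_add_le_exp_mul. lra. }
  apply Rmult_le_reg_r with (INR r ^ r); [exact Hrr |].
  rewrite Cmod_gbinom.
  apply Rle_trans with (2 ^ r * (exp (b / 2) * INR r ^ r) / INR (Factorial.fact r)
                        * (exp (INR r) * INR (Factorial.fact r))).
  - generalize (INR_fact_lt_0 r) (Cmod_ge_0 (rising s r)). intros Hf Hc.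
    apply Rmult_le_compat; [| exact (Rlt_le _ _ Hrr) | | apply pow_le_exp_mul_fact].
    + apply Rdiv_le_0_compat; [exact Hc | exact Hf].
    + apply Rmult_le_compat_r; [exact (Rlt_le _ _ (Rinv_0_lt_compat _ Hf)) | exact Hrising].
  - right. field. apply INR_fact_neq_0.
Qed.

Lemma Cmod_gbinom_le_exp s r b : 0 <= b -> Cmod s <= b + INR r ->
  Cmod (gbinom s r) <= exp (9/5 * INR r + b / 2).
Proof.
  intros Hb Hs. eapply Rle_trans; [apply (Cmod_gbinom_le _ _ b Hb Hs) |].
  apply Rle_trans with (exp (INR r) * exp (INR r * (4/5)) * exp (b / 2)).
  - apply Rmult_le_compat_r; [left; apply exp_pos |].
    apply Rmult_le_compat_l; [left; apply exp_pos |].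
    apply pow_le_exp_mul; [lra | exact two_le_exp_4_5].
  - rewrite <- !exp_plus. apply exp_le_compat. lra.
Qed.

Definition envelope (sigma v x : R) : R :=
  (sigma - 1) * ln x - (Rabs (sigma - 1) + ((sigma - 1) ^ 2 + v ^ 2) / 2) / x.

Lemma Cmod_shift_div_le_exp_envelope sigma v x : 0 < x ->
  Cmod (Cplus (sigma, v) x) / (x + 1)
    <= exp (envelope sigma v (x + 1) - envelope sigma v x).
Proof.
  intros Hx.
  set (d := sigma - 1). set (A := ln (x + 1) - ln x).
  set (E := envelope sigma v (x + 1) - envelope sigma v x).
  assert (HE : E = d * A + (Rabs d + (d ^ 2 + v ^ 2) / 2) * (/ x - / (x + 1))).
  { unfold E, envelope, A. fold d. field. lra. }
  assert (HA : / (x + 1) <= A <= / x).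
  { generalize (ln_sub_le_div x (x + 1)) (ln_sub_le_div (x + 1) x). unfold A.
    replace ((x + 1 - x) / x) with (/ x) by (field; lra).
    replace ((x - (x + 1)) / (x + 1)) with (- / (x + 1)) by (field; lra).
    intros H1 H2. specialize (H1 ltac:(lra) ltac:(lra)). specialize (H2 ltac:(lra) ltac:(lra)).
    lra. }
  assert (Hlin : d / (x + 1) <= d * A + Rabs d * (/ x - / (x + 1))).
  { unfold Rdiv. destruct (Rle_or_lt 0 d) as [Hd | Hd].
    - rewrite Rabs_pos_eq by exact Hd. nra.
    - rewrite Rabs_left by exact Hd. nra. }
  assert (Hquad : (d ^ 2 + v ^ 2) / (x + 1) ^ 2 <= (d ^ 2 + v ^ 2) * (/ x - / (x + 1))).
  { replace (/ x - / (x + 1)) with (/ (x * (x + 1))) by (field; lra).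
    unfold Rdiv. apply Rmult_le_compat_l; [nra |].
    apply Rinv_le_contravar; nra. }
  set (Z := ((sigma + x) ^ 2 + v ^ 2) / (x + 1) ^ 2).
  assert (HZ : Z - 1 = 2 * (d / (x + 1)) + (d ^ 2 + v ^ 2) / (x + 1) ^ 2).
  { unfold Z, d. field. lra. }
  assert (HZexp : Z <= exp E * exp E).
  { rewrite <- exp_plus. generalize (exp_ineq1_le (Z - 1)). intros H.
    apply Rle_trans with (exp (Z - 1)); [lra |]. apply exp_le_compat. lra. }
  replace (Cmod (Cplus (sigma, v) x) / (x + 1)) with (sqrt Z).
  - rewrite <- (sqrt_square (exp E)) by (left; apply exp_pos).
    apply sqrt_le_1_alt. exact HZexp.
  - unfold Z, Cmod, Cplus, RtoC. cbn [fst snd].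
    rewrite Rplus_0_r, sqrt_div_alt, sqrt_pow2 by nra. reflexivity.
Qed.

Lemma Cmod_gbinom_le_envelope sigma v N r : (1 <= N <= r)%nat ->
  Cmod (gbinom (sigma, v) r)
    <= Cmod (gbinom (sigma, v) N) * exp (envelope sigma v (INR r) - envelope sigma v (INR N)).
Proof.
  intros [HN Hr]. induction Hr as [| r Hr IH].
  - rewrite Rminus_diag, exp_0. lra.
  - assert (Hpos : 0 < INR r) by (apply lt_0_INR; lia).
    rewrite Cmod_gbinom_S, S_INR.
    eapply Rle_trans.
    { apply Rmult_le_compat; [apply Cmod_ge_0 | | exact IH |].
      - apply Rdiv_le_0_compat; [apply Cmod_ge_0 | lra].
      - apply Cmod_shift_div_le_exp_envelope, Hpos. }
    rewrite Rmult_assoc, <- exp_plus. right. do 2 f_equal. ring.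
Qed.

Definition bound_constant (sigma : R) : R :=
  2 + Rabs sigma + 2 * Rabs (sigma - 1/2) + Rabs (sigma - 1) + (sigma - 1) ^ 2.

Definition bound_exponent (sigma v x : R) : R :=
  bound_constant sigma + (sigma - 1/2) * ln (x + Rabs v) - 1/2 * ln x
  - (sigma - 1/2) * ln (Rabs v) + Cmod (sigma, v) + PI / 2 * Rabs v.

Lemma exp_bound_exponent sigma v x :
  exp (bound_constant sigma) * (Rpower (x + Rabs v) (sigma - 1/2) * exp (Cmod (sigma, v)))
    / (Rpower x (1/2) * Rpower (Rabs v) (sigma - 1/2)) * exp (PI / 2 * Rabs v)
  = exp (bound_exponent sigma v x).
Proof.
  unfold bound_exponent, Rpower, Rminus. rewrite !exp_plus, !exp_Ropp.
  field. split; apply exp_neq_0.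
Qed.

Section LargeImaginaryPart.

Variables (sigma v : R) (N r : nat).
Hypothesis Hv : 48 <= Rabs v.
Hypothesis HN : Rabs v <= INR N <= Rabs v + 1.

Lemma Cmod_gbinom_le_bound_small : (1 <= r <= N)%nat ->
  Cmod (gbinom (sigma, v) r) <= exp (bound_exponent sigma v (INR r)).
Proof.
  intros [Hr1 HrN].
  set (w := Rabs v) in *. set (s := Cmod (sigma, v)).
  assert (Hws : w <= s) by apply Rabs_snd_le_Cmod.
  assert (Hr : 1 <= INR r <= w + 1).
  { split; [apply (le_INR 1), Hr1 |].
    apply Rle_trans with (INR N); [apply le_INR, HrN | lra]. }
  eapply Rle_trans; [apply (Cmod_gbinom_le_exp _ _ s); [apply Cmod_ge_0 | fold s; lra] |].
  apply exp_le_compat.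
  assert (Hlog : Rabs (ln (INR r + w) - ln w) <= 2).
  { apply Rabs_le. split.
    - assert (ln w <= ln (INR r + w)) by (apply ln_le; lra). lra.
    - eapply Rle_trans; [apply ln_sub_le_div; lra |].
      apply Rle_div_l; lra. }
  generalize (mul_bounded_by_Rabs (sigma - 1/2) _ _ Hlog).
  assert (ln (INR r) <= w / 4).
  { eapply Rle_trans; [apply ln_le; [lra | apply Hr] | apply ln_succ_le_quarter, Hv]. }
  assert (3 / 2 * w <= PI / 2 * w) by (apply Rmult_le_compat_r; [lra | left; apply PI2_3_2]).
  generalize (Rabs_pos sigma) (Rabs_pos (sigma - 1)) (pow2_ge_0 (sigma - 1)).
  unfold bound_exponent, bound_constant. fold w s. lra.
Qed.

Lemma Cmod_gbinom_le_bound_large : (N <= r)%nat ->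
  Cmod (gbinom (sigma, v) r) <= exp (bound_exponent sigma v (INR r)).
Proof.
  intros HNr.
  set (w := Rabs v) in *. set (s := Cmod (sigma, v)).
  assert (Hws : w <= s) by apply Rabs_snd_le_Cmod.
  assert (HN1 : (1 <= N)%nat) by (apply INR_le; simpl; lra).
  assert (Hr : INR N <= INR r) by (apply le_INR, HNr).
  assert (HgN : Cmod (gbinom (sigma, v) N) <= exp (9/5 * INR N + Rabs sigma / 2)).
  { apply Cmod_gbinom_le_exp; [apply Rabs_pos |].
    eapply Rle_trans; [apply Cmod_le_Rabs_add |]. fold w. lra. }
  eapply Rle_trans; [apply (Cmod_gbinom_le_envelope _ _ N); lia |].
  eapply Rle_trans.
  { apply Rmult_le_compat_r; [left; apply exp_pos | exact HgN]. }
  rewrite <- exp_plus. apply exp_le_compat.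
  set (c := Rabs (sigma - 1) + (sigma - 1) ^ 2 / 2).
  assert (Hc : 0 <= c).
  { generalize (Rabs_pos (sigma - 1)) (pow2_ge_0 (sigma - 1)). unfold c. lra. }
  assert (Hq : (c + w ^ 2 / 2) * (/ INR N - / INR r) <= c + w / 2).
  { apply Rle_trans with ((c + w ^ 2 / 2) / INR N).
    - unfold Rdiv. apply Rmult_le_compat_l; [generalize (pow2_ge_0 w); lra |].
      generalize (Rinv_0_lt_compat (INR r) ltac:(lra)). lra.
    - apply Rle_div_l; [lra |]. nra. }
  assert (Hlog : Rabs ((ln (INR r) - ln (INR r + w)) + (ln w - ln (INR N))) <= 2).
  { assert (ln (INR r) <= ln (INR r + w)) by (apply ln_le; lra).
    assert (ln w <= ln (INR N)) by (apply ln_le; lra).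
    assert (ln (INR r + w) - ln (INR r) <= 1).
    { eapply Rle_trans; [apply ln_sub_le_div; lra |]. apply Rle_div_l; lra. }
    assert (ln (INR N) - ln w <= 1).
    { eapply Rle_trans; [apply ln_sub_le_div; lra |]. apply Rle_div_l; lra. }
    rewrite Rabs_left1; lra. }
  generalize (mul_bounded_by_Rabs (sigma - 1/2) _ _ Hlog).
  assert (ln (INR N) <= w / 4).
  { eapply Rle_trans; [apply ln_le; [lra | apply HN] | apply ln_succ_le_quarter, Hv]. }
  assert (3 / 2 * w <= PI / 2 * w) by (apply Rmult_le_compat_r; [lra | left; apply PI2_3_2]).
  generalize (Rabs_pos sigma) (pow2_ge_0 (sigma - 1)).
  unfold envelope, bound_exponent, bound_constant. rewrite <- (pow2_abs v). fold w s.
  unfold c in Hq. lra.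
Qed.

End LargeImaginaryPart.

Lemma Cmod_gbinom_le_exp_bound_exponent sigma v r : (1 <= r)%nat -> 48 <= Rabs v ->
  Cmod (gbinom (sigma, v) r) <= exp (bound_exponent sigma v (INR r)).
Proof.
  intros Hr Hv.
  destruct (nfloor_ex (Rabs v)) as [n Hn]; [lra |].
  assert (HN : Rabs v <= INR (S n) <= Rabs v + 1) by (rewrite S_INR; lra).
  destruct (Nat.le_ge_cases r (S n)).
  - apply (Cmod_gbinom_le_bound_small _ _ (S n)); auto.
  - apply (Cmod_gbinom_le_bound_large _ _ (S n)); auto.
Qed.

Theorem lemma2p2 (sigma : R) :
  exists C0 V0 : R, 0 < C0 /\ 0 < V0 /\
    forall (r : nat) (v : R), (1 <= r)%nat -> V0 <= Rabs v ->
      Cmod (gbinom (sigma, v) r) <=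
        C0 * (Rpower (INR r + Rabs v) (sigma - 1/2) * exp (Cmod (sigma, v)))
           / (Rpower (INR r) (1/2) * Rpower (Rabs v) (sigma - 1/2))
           * exp (PI / 2 * Rabs v).
Proof.
  exists (exp (bound_constant sigma)), 48.
  split; [apply exp_pos | split; [lra |]].
  intros r v Hr Hv. rewrite exp_bound_exponent.
  apply Cmod_gbinom_le_exp_bound_exponent; assumption.
Qed.
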